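(* Let $k\ge3$ and $m\ge1$ be integers, let $\alpha\in(0,1)$, and let $F$ be a $k$-partite $k$-graph each of whose parts has exactly $m$ vertices. There exist $\eta>0$ and $n_0$ such that for every $n\ge n_0$ the following holds: if $H$ is a $k$-partite $k$-graph each of whose parts has exactly $n$ vertices and $\delta'_{k-1}(H)\ge\alpha n$, then every vertex $v\in V(H)$ is contained in at least $\eta n^{km-1}$ copies of $F$ in $H$.
   Context: A $k$-partite $k$-graph $H$ is a $k$-graph with a fixed partition $V(H)=V_1\cup\dots\cup V_k$ (its parts) such that every edge meets each $V_i$ in at most one vertex. A set $S$ is legal if $|S\cap V_i|\le1$ for all $i$. $\deg_H(S)$ is the number of $(k-|S|)$-sets $S'$ with $S\cup S'\in E(H)$; $\delta'_{k-1}(H)$ is the minimum of $\deg_H(S)$ over legal $(k-1)$-sets $S$. A copy of $F$ in $H$ is a subgraph of $H$ isomorphic to $F$. *)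

From mathcomp Require Import all_boot all_order all_algebra.
From mathcomp Require Import reals.
Set Implicit Arguments. Unset Strict Implicit. Unset Printing Implicit Defensive.

(* A k-partite k-graph whose parts all have n vertices: vertex set
   'I_k * 'I_n, where vertex (i, j) lies in part V_i. *)

Definition legal (k n : nat) (S : {set 'I_k * 'I_n}) : bool :=
  [forall i : 'I_k, #|[set x in S | x.1 == i]| <= 1].

Definition kpk_graph (k n : nat) (E : {set {set 'I_k * 'I_n}}) : bool :=
  [forall e in E, legal e && (#|e| == k)].

Definition codeg (k n : nat) (E : {set {set 'I_k * 'I_n}})
    (S : {set 'I_k * 'I_n}) : nat :=
  #|[set x | (x |: S) \in E]|.

Definition is_copy (TF TH : finType) (EF : {set {set TF}})
    (EH : {set {set TH}}) (c : {set TH} * {set {set TH}}) : bool :=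
  [exists f : {ffun TF -> TH},
     [&& injectiveb f, c.1 == f @: setT,
         c.2 == [set f @: (e : {set TF}) | e in EF] & c.2 \subset EH]].

Definition copies_at (TF TH : finType) (EF : {set {set TF}})
    (EH : {set {set TH}}) (v : TH) : {set {set TH} * {set {set TH}}} :=
  [set c | is_copy EF EH c && (v \in c.1)].

From mathcomp Require Import all_boot all_order all_algebra reals.
From mathcomp Require Import zify ring lra.
Import Order.TTheory GRing.Theory Num.Theory.
Local Open Scope ring_scope.
Set Implicit Arguments. Unset Strict Implicit. Unset Printing Implicit Defensive.

(* Let K be the complete k-partite k-graph with the m vertices (i, j) in each
   part i, so that F is a subgraph of K.  A placement g : 'I_k * 'I_m -> 'I_n
   sends the vertex (i, j) of K to the vertex (i, g (i, j)) of part i of H;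
   it is rooted if it sends a fixed vertex (i0, z) of K to v = (i0, j0).  The
   edges of K are the transversals selected by maps h : 'I_k -> 'I_m, and g
   maps the box B if it is rooted and maps into H every edge of K whose
   selector is z outside the parts of B.  Counting placements with sums of
   indicators:
   - by the codegree condition, a fraction alpha^(m+1) of the n^(km-1)
     rooted placements maps the box {i0} (box_count_root);
   - adding a part p to B raises this fraction to its m-th power, by the
     power-mean inequality (box_count_add_part); hence a fraction
     c = alpha^((m+1) m^(k-1)) maps the whole of K (box_count_full);
   - at most (km)^2 n^(km-2) rooted placements are not injective
     (box_count_injective), an injective one traces a copy of F through v
     (copy_of_mem), and a copy is traced by at most (km)^(km) placements.
   So the number of copies is at least (c - (km)^2/n) n^(km-1) / (km)^(km),
   which is at least c/(2 (km)^(km)) n^(km-1) for n >= 2 (km)^2 / c.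
   The argument only uses k >= 2 and alpha > 0. *)

Section PowerMean.
Variable R : realDomainType.

Lemma chebyshev_powers (T : finType) (P : {pred T}) (y : T -> R) (r : nat) :
  (forall t, 0 <= y t) ->
  (\sum_(t in P) y t) * (\sum_(t in P) y t ^+ r)
    <= #|P|%:R * \sum_(t in P) y t ^+ r.+1.
Proof.
move=> y_ge0.
have term_ge0 a b : 0 <= (y a - y b) * (y a ^+ r - y b ^+ r).
  have [le_ab|lt_ba] := leP (y a) (y b).
    by apply: mulr_le0; rewrite subr_le0 // (lerXn2r r _ _ le_ab) ?nnegrE.
  have le_ba := ltW lt_ba.
  by apply: mulr_ge0; rewrite subr_ge0 // (lerXn2r r _ _ le_ba) ?nnegrE.
set S1 := \sum_(t in P) y t; set Sr := \sum_(t in P) y t ^+ r.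
set Sr1 := \sum_(t in P) y t ^+ r.+1.
have double_sum : \sum_(a in P) \sum_(b in P) (y a - y b) * (y a ^+ r - y b ^+ r)
    = 2 * (#|P|%:R * Sr1 - S1 * Sr).
  have expand a b : (y a - y b) * (y a ^+ r - y b ^+ r)
      = y a ^+ r.+1 + y b ^+ r.+1 - (y a * y b ^+ r + y b * y a ^+ r).
    by rewrite !exprS; ring.
  under eq_bigr => a _ do under eq_bigr => b _ do rewrite expand.
  under eq_bigr => a _ do rewrite sumrB !big_split /=.
  rewrite sumrB !big_split /=.
  have -> : \sum_(a in P) \sum_(b in P) y a ^+ r.+1 = #|P|%:R * Sr1.
    by rewrite mulr_sumr; apply: eq_bigr => a _; rewrite sumr_const mulr_natl.
  have -> : \sum_(a in P) \sum_(b in P) y b ^+ r.+1 = #|P|%:R * Sr1.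
    by rewrite sumr_const mulr_natl.
  have -> : \sum_(a in P) \sum_(b in P) y a * y b ^+ r = S1 * Sr.
    by rewrite mulr_suml; apply: eq_bigr => a _; rewrite mulr_sumr.
  have -> : \sum_(a in P) \sum_(b in P) y b * y a ^+ r = S1 * Sr.
    by rewrite mulr_sumr; apply: eq_bigr => a _; rewrite -mulr_suml mulrC.
  ring.
have : 0 <= \sum_(a in P) \sum_(b in P) (y a - y b) * (y a ^+ r - y b ^+ r).
  by apply: sumr_ge0 => a _; apply: sumr_ge0 => b _; exact: term_ge0.
by rewrite double_sum pmulr_rge0 // subr_ge0.
Qed.

Lemma power_mean_sum (T : finType) (P : {pred T}) (y : T -> R) (r : nat) :
  (forall t, 0 <= y t) ->
  (\sum_(t in P) y t) ^+ r.+1 <= #|P|%:R ^+ r * \sum_(t in P) y t ^+ r.+1.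
Proof.
move=> y_ge0; elim: r => [|r IH]; first by rewrite expr0 mul1r expr1.
have S_ge0 : 0 <= \sum_(t in P) y t by exact: sumr_ge0.
rewrite exprS; apply: le_trans (ler_wpM2l S_ge0 IH) _.
rewrite mulrCA exprSr -mulrA ler_wpM2l ?exprn_ge0 //.
exact: chebyshev_powers.
Qed.

End PowerMean.

Section CountingSums.
Variable R : pzSemiRingType.

(* Double counting along a splitting of X into a "rest" and a coordinate in
   Y: if upd C a overwrites the coordinate of C by a, and get reads it,
   then summing F over all (C, a) counts every element |Y| times. *)
Lemma sum_over_split (X Y : finType) (upd : X -> Y -> X) (get : X -> Y)
    (F : X -> R) :
  (forall C a, upd (upd C a) (get C) = C) -> (forall C a, get (upd C a) = a) ->
  \sum_(C : X) \sum_(a : Y) F (upd C a) = #|Y|%:R * \sum_(g : X) F g.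
Proof.
move=> updK getK; rewrite pair_big /=.
pose swap (q : X * Y) := (upd q.1 q.2, get q.1).
have swapK : involutive swap by case=> C a; rewrite /swap /= updK getK.
rewrite (reindex_inj (inv_inj swapK)) /= /swap.
under eq_bigr => q _ do rewrite updK.
rewrite -(pair_big xpredT xpredT (fun g (_ : Y) => F g)) /= mulr_sumr.
by apply: eq_bigr => g _; rewrite sumr_const mulr_natl.
Qed.

Definition ffun_upd (I T : finType) (g : {ffun I -> T}) (x : I) (t : T) :
    {ffun I -> T} :=
  [ffun y => if y == x then t else g y].

Lemma sum_ffun_upd (I T : finType) (x : I) (F : {ffun I -> T} -> R) :
  \sum_(g : {ffun I -> T}) \sum_(t : T) F (ffun_upd g x t)
    = #|T|%:R * \sum_g F g.
Proof.
apply: (sum_over_split (upd := fun g t => ffun_upd g x t) (get := fun g => g x)).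
  by move=> g t; apply/ffunP => y; rewrite !ffunE; case: eqP => // ->.
by move=> g t; rewrite ffunE eqxx.
Qed.

Lemma card_indicator (T : finType) (A : {pred T}) :
  (#|A|%:R : R) = \sum_(t : T) (t \in A)%:R.
Proof.
rewrite -sum1_card natr_sum big_mkcond /=.
by apply: eq_bigr => t _; case: (t \in A).
Qed.

Lemma sum_indicator_card (T : finType) (P : pred T) :
  \sum_(t : T) ((P t)%:R : R) = #|[set t | P t]|%:R.
Proof. by rewrite card_indicator; apply: eq_bigr => t _; rewrite inE. Qed.

Lemma sum_indicator_pred1 (T : finType) (t0 : T) :
  \sum_(t : T) ((t == t0)%:R : R) = 1.
Proof. by rewrite (bigD1 t0) //= eqxx big1 ?addr0 // => t /negbTE ->. Qed.

End CountingSums.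

Section Transversals.
Variables k n : nat.
Implicit Types (y : 'I_k -> 'I_n) (q : 'I_k) (w : 'I_n).

Lemma legal_part_inj (S : {set 'I_k * 'I_n}) :
  legal S -> {in S &, injective fst}.
Proof.
move=> /forallP legS [i a] [i' b] xS yS /= eii'; rewrite -eii' in yS *.
apply/eqP; apply: contraTT (legS i) => neq; rewrite -ltnNge.
have sub : [set (i, a); (i, b)] \subset [set x in S | x.1 == i].
  by apply/subsetP => x; rewrite !inE => /orP[] /eqP -> /=; rewrite eqxx ?xS ?yS.
by apply: leq_trans (subset_leq_card sub); rewrite cards2 neq.
Qed.

Definition transversal_of y : {set 'I_k * 'I_n} := [set (i, y i) | i : 'I_k].

Definition set_coord y q w : 'I_k -> 'I_n := fun i => if i == q then w else y i.

Definition punctured y q : {set 'I_k * 'I_n} := [set (i, y i) | i in [set~ q]].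

Lemma transversal_inj y : injective (fun i => (i, y i)).
Proof. by move=> i j []. Qed.

Lemma mem_punctured y q x : (x \in punctured y q) = (x.1 != q) && (x == (x.1, y x.1)).
Proof.
apply/imsetP/andP => [[i iq ->]|[xq /eqP ->]]; last by exists x.1; rewrite ?inE.
by rewrite !inE in iq; rewrite /= iq eqxx.
Qed.

Lemma punctured_legal y q : legal (punctured y q).
Proof.
apply/forallP => i; rewrite -(cards1 (i, y i)) subset_leq_card //.
apply/subsetP => x; rewrite !inE mem_punctured => /andP[/andP[_ /eqP ex] /eqP xi].
by rewrite ex xi.
Qed.

Lemma card_punctured y q : #|punctured y q| = k.-1.
Proof. by rewrite card_imset ?cardsC1 ?card_ord //; exact: transversal_inj. Qed.

Lemma punctured_extend y q w :
  (q, w) |: punctured y q = transversal_of (set_coord y q w).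
Proof.
apply/setP => -[i j]; rewrite in_setU1 mem_punctured /=.
apply/idP/imsetP => [|[i' _ [-> ->]]].
  rewrite /set_coord; case/orP => [/eqP[-> ->]|/andP[iq /eqP[->]]].
    by exists q; rewrite ?eqxx.
  by exists i => //; rewrite (negbTE iq).
rewrite /set_coord; case: (eqVneq i' q) => [->|i'q] /=; first by rewrite eqxx.
by rewrite eqxx orbT.
Qed.

Lemma edge_through_punctured (E : {set {set 'I_k * 'I_n}}) y q x :
  kpk_graph E -> x |: punctured y q \in E -> x.1 = q.
Proof.
move=> /forallP /(_ (x |: punctured y q)) Eok xE; rewrite xE /= in Eok.
case/andP: Eok => legE /eqP cardE.
have xS : x \notin punctured y q.
  apply/negP => xS; move: cardE (ltn_ord q).
  by rewrite (setUidPr _) ?sub1set // card_punctured; lia.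
apply/eqP; apply: contraNT xS => xq.
have yE : (x.1, y x.1) \in x |: punctured y q.
  by rewrite !inE mem_punctured /= xq eqxx orbT.
rewrite mem_punctured xq; apply/eqP.
exact: (legal_part_inj legE (setU11 _ _) yE).
Qed.

Lemma codeg_transversal (R : numDomainType) (alpha : R)
    (E : {set {set 'I_k * 'I_n}}) y q :
  kpk_graph E ->
  (forall S, legal S -> #|S| = k.-1 -> alpha * n%:R <= (codeg E S)%:R) ->
  alpha * n%:R <= #|[set w | transversal_of (set_coord y q w) \in E]|%:R.
Proof.
move=> Ek codegE.
apply: le_trans (codegE _ (punctured_legal y q) (card_punctured y q)) _.
rewrite ler_nat /codeg.
have -> : [set x | x |: punctured y q \in E]
    = (fun w => (q, w)) @: [set w | transversal_of (set_coord y q w) \in E].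
  apply/setP => -[i j]; rewrite inE; apply/idP/imsetP => [ijE|[w]].
    have /= iq := edge_through_punctured Ek ijE; rewrite iq in ijE *.
    by exists j; rewrite // inE -punctured_extend.
  by rewrite inE -punctured_extend => wE [-> ->].
by rewrite card_imset // => a b [].
Qed.

End Transversals.

Lemma legal_edge_transversal (k m : nat) (e : {set 'I_k * 'I_m}) :
  legal e -> #|e| = k -> exists h : {ffun 'I_k -> 'I_m}, e = transversal_of h.
Proof.
move=> legE cardE.
have cover : [set x.1 | x in e] = setT.
  apply/eqP; rewrite eqEcard subsetT cardsT card_ord card_in_imset ?cardE ?leqnn //.
  exact: (legal_part_inj legE).
have /fin_all_exists[h eh] : forall i, exists j, (i, j) \in e.
  move=> i; have : i \in [set x.1 | x in e] by rewrite cover.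
  by case/imsetP => -[i' j] je /= ->; exists j.
exists [ffun i => h i]; apply/eqP; rewrite eq_sym eqEcard cardE.
rewrite card_imset ?card_ord ?leqnn ?andbT; last exact: transversal_inj.
by apply/subsetP => x /imsetP[i _ ->]; rewrite ffunE.
Qed.

(* Placements of K into H rooted at v = (i0, j0), for a vertex (i0, z) of K. *)
Section Placements.
Variables (R : realFieldType) (k m n : nat) (EH : {set {set 'I_k * 'I_n}}).
Variables (i0 : 'I_k) (z : 'I_m) (j0 : 'I_n).

Local Notation placement := {ffun 'I_k * 'I_m -> 'I_n}.
Local Notation row := {ffun 'I_m -> 'I_n}.
Local Notation selector := {ffun 'I_k -> 'I_m}.

(* The vertices (i0, z) and (i0, j0) witness that all dimensions are positive. *)
Lemma km_gt0 : (0 < k * m)%N.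
Proof.
by rewrite muln_gt0 (leq_ltn_trans _ (ltn_ord i0)) ?(leq_ltn_trans _ (ltn_ord z)).
Qed.

Lemma n_gt0 : (0 < n)%N.
Proof. exact: leq_ltn_trans (leq0n j0) (ltn_ord j0). Qed.

Definition image_transversal (g : placement) (h : selector) : {set 'I_k * 'I_n} :=
  transversal_of (fun i => g (i, h i)).

Definition in_box (B : {set 'I_k}) (h : selector) : bool :=
  [forall q, (q \notin B) ==> (h q == z)].

Definition rooted (g : placement) : bool := g (i0, z) == j0.

Definition maps_box (B : {set 'I_k}) (g : placement) : bool :=
  rooted g && [forall h, in_box B h ==> (image_transversal g h \in EH)].

Definition box_count (B : {set 'I_k}) : R := \sum_(g : placement) (maps_box B g)%:R.
Definition rooted_count : R := \sum_(g : placement) (rooted g)%:R.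

Lemma box_count_ge0 B : 0 <= box_count B.
Proof. by apply: sumr_ge0 => g _; exact: ler0n. Qed.

Lemma rooted_count_ge0 : 0 <= rooted_count.
Proof. by apply: sumr_ge0 => g _; exact: ler0n. Qed.

Lemma card_placement : (#|placement|%:R : R) = n%:R * rooted_count.
Proof.
rewrite -[in n%:R](card_ord n) /rooted_count -(sum_ffun_upd (i0, z)).
rewrite -sum1_card natr_sum; apply: eq_bigr => g _.
under eq_bigr => t _ do rewrite /rooted ffunE eqxx.
by rewrite sum_indicator_pred1.
Qed.

Lemma rooted_countE : rooted_count = n%:R ^+ (k * m).-1.
Proof.
apply: (mulfI (_ : n%:R != 0 :> R)); first by rewrite pnatr_eq0 -lt0n n_gt0.
rewrite -card_placement card_ffun card_prod !card_ord -exprS prednK ?km_gt0 //.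
by rewrite natrX.
Qed.

Definition replace_part (C : placement) (p : 'I_k) (a : row) : placement :=
  [ffun x => if x.1 == p then a x.2 else C x].

Lemma sum_replace_part p (F : placement -> R) :
  \sum_(C : placement) \sum_(a : row) F (replace_part C p a)
    = #|row|%:R * \sum_(g : placement) F g.
Proof.
apply: (sum_over_split (upd := fun C a => replace_part C p a)
                       (get := fun C => [ffun j => C (p, j)])).
  by move=> C a; apply/ffunP => -[i j]; rewrite !ffunE /=; case: eqP => // ->.
by move=> C a; apply/ffunP => j; rewrite !ffunE eqxx.
Qed.

Lemma image_transversal_replace C p a h :
  image_transversal (replace_part C p a) h
    = transversal_of (set_coord (fun i => C (i, h i)) p (a (h p))).
Proof.
apply: eq_imset => i; rewrite ffunE /set_coord /=.
by case: eqP => [->|].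
Qed.

Lemma transversal_of_set_coord_eq (y y' : 'I_k -> 'I_n) q w :
  (forall i, i != q -> y i = y' i) ->
  transversal_of (set_coord y q w) = transversal_of (set_coord y' q w).
Proof.
move=> eq_y; apply: eq_imset => i; rewrite /set_coord.
by case: eqVneq => // /eq_y ->.
Qed.

Lemma in_box_upd B p h j : in_box B h -> in_box (p |: B) (ffun_upd h p j).
Proof.
move=> /forallP hB; apply/forallP => q; rewrite ffunE !inE negb_or.
by case: (eqVneq q p) => //= _; exact: hB.
Qed.

Lemma in_box_reset B p h : in_box (p |: B) h -> in_box B (ffun_upd h p z).
Proof.
move=> /forallP hB; apply/forallP => q; rewrite ffunE.
case: (eqVneq q p) => [_|qp]; first by rewrite eqxx implybT.
by apply/implyP => qB; have := hB q; rewrite !inE (negbTE qp) /= qB.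
Qed.

Lemma in_box0 : in_box set0 [ffun=> z].
Proof. by apply/forallP => q; rewrite ffunE eqxx implybT. Qed.

Lemma in_boxT h : in_box setT h.
Proof. by apply/forallP => q; rewrite inE. Qed.

Lemma sum_rows_in (G : {set 'I_n}) :
  (j0 \in G)%:R * #|G|%:R ^+ m
    <= n%:R * \sum_(a : row) ((a z == j0) && [forall j, a j \in G])%:R :> R.
Proof.
rewrite -[in n%:R](card_ord n) -(sum_ffun_upd z) -natrX.
have -> : (#|G| ^ m)%N = #|finfun.ffun_on_mem 'I_m (mem G)|.
  by rewrite card_ffun_on card_ord.
rewrite card_indicator mulr_sumr; apply: ler_sum => a _.
have [j0G|_] := boolP (j0 \in G); last by rewrite mul0r sumr_ge0.
have [aG|_] := boolP (a \in ffun_on G); last by rewrite mulr0 sumr_ge0.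
rewrite mulr1 (bigD1 j0) //= ffunE !eqxx /=.
have -> : [forall j, ffun_upd a z j0 j \in G].
  by apply/forallP => j; rewrite ffunE; case: eqP => // _; exact: (ffun_onP aG).
by rewrite lerDl sumr_ge0.
Qed.

Lemma card_row : (#|row|%:R : R) = n%:R ^+ m.
Proof. by rewrite card_ffun !card_ord natrX. Qed.

Lemma image_transversal_replace_upd C p a h j :
  image_transversal (replace_part C p a) (ffun_upd h p j)
    = image_transversal (replace_part C p [ffun=> a j]) h.
Proof.
rewrite !image_transversal_replace !ffunE eqxx.
by apply: transversal_of_set_coord_eq => i ip; rewrite ffunE (negbTE ip).
Qed.

Section AddPart.
Variables (B : {set 'I_k}) (p : 'I_k).
Hypotheses (p_i0 : p != i0) (p_B : p \notin B).

Definition extensions (C : placement) : {set 'I_n} :=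
  [set w | maps_box B (replace_part C p [ffun=> w])].

Lemma rooted_replace C a : rooted (replace_part C p a) = rooted C.
Proof. by rewrite /rooted ffunE /= [i0 == p]eq_sym (negbTE p_i0). Qed.

Lemma extensions_unrooted C : ~~ rooted C -> extensions C = set0.
Proof.
by move=> /negbTE C_root; apply/setP => w; rewrite !inE /maps_box rooted_replace C_root.
Qed.

(* Since p is outside B, a box map of B only sees the value a z of part p. *)
Lemma maps_box_replace C a :
  maps_box B (replace_part C p a) = (a z \in extensions C).
Proof.
rewrite inE /maps_box !rooted_replace; congr andb; apply: eq_forallb => h.
case h_box: (in_box B h) => //=.
have h_p : h p = z by have := forallP h_box p; rewrite p_B => /eqP.
by rewrite !image_transversal_replace ffunE h_p.
Qed.

Lemma maps_box_add_part C a :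
  maps_box (p |: B) (replace_part C p a) = [forall j, a j \in extensions C].
Proof.
apply/idP/forallP => [/andP[C_root all_h] j|all_j].
  rewrite rooted_replace in C_root; rewrite inE /maps_box rooted_replace C_root /=.
  apply/forallP => h; apply/implyP => h_box.
  rewrite -image_transversal_replace_upd.
  by have /implyP := forallP all_h (ffun_upd h p j); apply; exact: in_box_upd.
have := all_j z; rewrite inE => /andP[]; rewrite rooted_replace => C_root _.
rewrite /maps_box rooted_replace C_root /=; apply/forallP => h; apply/implyP => h_box.
have -> : h = ffun_upd (ffun_upd h p z) p (h p).
  by apply/ffunP => i; rewrite !ffunE; case: eqP => // ->.
rewrite image_transversal_replace_upd.
have := all_j (h p); rewrite inE => /andP[_ /forallP /(_ (ffun_upd h p z))].
by rewrite in_box_reset.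
Qed.

Lemma box_count_extensions :
  n%:R * box_count B = \sum_(C : placement) #|extensions C|%:R.
Proof.
apply: (mulfI (_ : #|row|%:R != 0 :> R)).
  by rewrite card_row expf_neq0 // pnatr_eq0 -lt0n n_gt0.
rewrite mulrCA /box_count.
have /= <- := sum_replace_part p (fun g => (maps_box B g)%:R).
rewrite !mulr_sumr; apply: eq_bigr => C _.
under eq_bigr => a _ do rewrite maps_box_replace.
have -> : n%:R * \sum_(a : row) (a z \in extensions C)%:R
    = #|'I_n|%:R * \sum_(a : row) (a z \in extensions C)%:R :> R.
  by rewrite card_ord.
rewrite -(sum_ffun_upd z).
under eq_bigr => a _ do under eq_bigr => t _ do rewrite ffunE eqxx.
under eq_bigr => a _ do rewrite -card_indicator.
by rewrite sumr_const mulr_natl.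
Qed.

Lemma box_count_add_extensions :
  #|row|%:R * box_count (p |: B) = \sum_(C : placement) #|extensions C|%:R ^+ m.
Proof.
rewrite /box_count.
have /= <- := sum_replace_part p (fun g => (maps_box (p |: B) g)%:R).
apply: eq_bigr => C _; under eq_bigr => a _ do rewrite maps_box_add_part.
rewrite -natrX -[in RHS](card_ord m) -card_ffun_on card_indicator.
by apply: eq_bigr => a _; congr (_%:R); apply/forallP/ffun_onP.
Qed.

(* Extension step of the supersaturation, by the power-mean inequality:
   if a fraction c of rooted placements maps the box of B, then a
   fraction c^m maps the box of p |: B. *)
Lemma box_count_add_part (c : R) : 0 <= c ->
  c * rooted_count <= box_count B -> c ^+ m * rooted_count <= box_count (p |: B).
Proof.
move=> c_ge0 B_count.
have m_gt0 : (0 < m)%N := leq_ltn_trans (leq0n z) (ltn_ord z).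
pose y C : R := #|extensions C|%:R.
pose rooted_set := [pred C : placement | rooted C].
have sum_rooted : \sum_(C : placement) y C = \sum_(C in rooted_set) y C.
  rewrite [RHS]big_mkcond; apply: eq_bigr => C _ /=.
  by case: ifP => // /negbT /extensions_unrooted; rewrite /y => ->; rewrite cards0.
have sum_pow_rooted : \sum_(C in rooted_set) y C ^+ m <= \sum_(C : placement) y C ^+ m.
  rewrite [X in _ <= X](bigID (mem rooted_set)) /= lerDl.
  by rewrite sumr_ge0 // => C _; rewrite exprn_ge0.
have hoelder := power_mean_sum rooted_set m.-1 (fun C => ler0n _ _ : 0 <= y C).
have card_rooted : #|rooted_set|%:R = rooted_count by rewrite card_indicator.
rewrite prednK // -sum_rooted -box_count_extensions card_rooted in hoelder.
have [P_eq0|P_neq0] := eqVneq rooted_count 0; first by rewrite P_eq0 mulr0 box_count_ge0.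
have P_gt0 : 0 < rooted_count by rewrite lt0r P_neq0 rooted_count_ge0.
have nP_gt0 : 0 < n%:R ^+ m * rooted_count ^+ m.-1.
  by rewrite mulr_gt0 ?exprn_gt0 ?ltr0n ?n_gt0.
rewrite -(ler_pM2l nP_gt0); apply: (@le_trans _ _ ((n%:R * box_count B) ^+ m)).
  rewrite exprMn -mulrA ler_wpM2l ?exprn_ge0 ?ler0n //.
  have -> : rooted_count ^+ m.-1 * (c ^+ m * rooted_count) = (c * rooted_count) ^+ m.
    by rewrite exprMn mulrCA -exprSr prednK.
  by apply: lerXn2r; rewrite ?nnegrE ?mulr_ge0 ?rooted_count_ge0 ?box_count_ge0.
apply: le_trans hoelder _.
rewrite -mulrA mulrCA ler_wpM2l ?exprn_ge0 ?rooted_count_ge0 //.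
by rewrite -card_row box_count_add_extensions.
Qed.

End AddPart.

Lemma rooted_collisions (x y : 'I_k * 'I_m) : x != y ->
  n%:R * \sum_(g : placement) (rooted g && (g x == g y))%:R = rooted_count.
Proof.
wlog x_root : x y / x != (i0, z) => [gen xy|xy].
  have [x_eq|x_root] := eqVneq x (i0, z); last exact: gen x_root xy.
  rewrite -(gen y x) 1?eq_sym -?x_eq //.
  by congr (_ * _); apply: eq_bigr => g _; rewrite eq_sym.
have -> : n%:R * \sum_(g : placement) (rooted g && (g x == g y))%:R
    = #|'I_n|%:R * \sum_(g : placement) (rooted g && (g x == g y))%:R :> R.
  by rewrite card_ord.
rewrite -(sum_ffun_upd x) /rooted_count; apply: eq_bigr => g _.
rewrite /rooted; under eq_bigr => t _ do
  rewrite !ffunE eqxx [y == x]eq_sym (negbTE xy) [_ == x]eq_sym (negbTE x_root).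
by case: (g (i0, z) == j0); rewrite ?sum_indicator_pred1 // big1.
Qed.

Lemma maps_box_collision g :
  (maps_box setT g)%:R <= (maps_box setT g && injectiveb g)%:R
    + \sum_x \sum_y ((x != y) && rooted g && (g x == g y))%:R :> R.
Proof.
have sums_ge0 : 0 <= \sum_x \sum_y ((x != y) && rooted g && (g x == g y))%:R :> R.
  by do 2!(apply: sumr_ge0 => ? _); exact: ler0n.
have [g_maps|] := boolP (maps_box setT g); last by rewrite add0r.
have [//|/injectivePn[x [y xy gxy]]] := boolP (injectiveb g); first by rewrite lerDl.
rewrite add0r (bigD1 x) //= (bigD1 y) //= xy gxy eqxx.
move: g_maps => /andP[-> _] /=; rewrite -addrA lerDl.
by apply: addr_ge0; do ![apply: sumr_ge0 => ? _ | exact: ler0n].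
Qed.

Lemma box_count_injective :
  box_count setT <= \sum_(g : placement) (maps_box setT g && injectiveb g)%:R
                    + (k * m)%:R ^+ 2 * rooted_count / n%:R.
Proof.
apply: le_trans (ler_sum _ (fun g _ => maps_box_collision g)) _.
rewrite big_split /= lerD2l exchange_big /=.
under eq_bigr => x _ do rewrite exchange_big /=.
have collisions_xy x y :
    \sum_(g : placement) ((x != y) && rooted g && (g x == g y))%:R
      <= rooted_count / n%:R.
  have n_pos : 0 < n%:R :> R by rewrite ltr0n n_gt0.
  have [->|xy] := eqVneq x y.
    by rewrite big1 ?divr_ge0 ?rooted_count_ge0 ?ler0n // => g _; rewrite eqxx.
  under eq_bigr => g _ do rewrite /=.
  by rewrite ler_pdivlMr // mulrC rooted_collisions.
apply: le_trans (ler_sum _ (fun x _ => ler_sum _ (fun y _ => collisions_xy x y))) _.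
rewrite !sumr_const card_prod !card_ord -mulrnA -[_ *+ _]mulr_natl.
by rewrite natrM -expr2 mulrA.
Qed.

Section Copies.
Variable EF : {set {set 'I_k * 'I_m}}.
Hypothesis EF_kpk : kpk_graph EF.

Definition copy_of (g : placement) : {set 'I_k * 'I_n} * {set {set 'I_k * 'I_n}} :=
  let f := fun x : 'I_k * 'I_m => (x.1, g x) in
  (f @: setT, [set f @: (e : {set 'I_k * 'I_m}) | e in EF]).

(* An injective placement mapping the full box is a copy of F through v,
   since every edge of F is a transversal of K. *)
Lemma copy_of_mem g : maps_box setT g -> injectiveb g ->
  copy_of g \in copies_at EF EH (i0, j0).
Proof.
move=> /andP[g_root /forallP g_maps] /injectiveP g_inj.
rewrite inE; apply/andP; split.
  2: by apply/imsetP; exists (i0, z); rewrite // (eqP g_root).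
apply/existsP; exists [ffun x => (x.1, g x)].
apply/and4P; split.
- by apply/injectiveP => x y; rewrite !ffunE => -[_ /g_inj].
- by apply/eqP; apply: eq_imset => x; rewrite ffunE.
- by apply/eqP; apply: eq_imset => e; apply: eq_imset => x; rewrite ffunE.
apply/subsetP => _ /imsetP[e eEF ->].
have /implyP/(_ eEF)/andP[e_legal /eqP e_card] := forallP EF_kpk e.
have [h ->] := legal_edge_transversal e_legal e_card.
have := g_maps h; rewrite in_boxT /=.
rewrite /image_transversal /transversal_of -imset_comp.
by congr (_ \in EH); apply: eq_imset.
Qed.

(* Each subgraph arises from at most (km)^(km) placements: such a placement
   is determined by a map from the km vertices of K to the at most km
   vertices of the subgraph. *)
Lemma copy_of_fibre c :
  (#|[set g : placement | copy_of g == c]| <= (k * m) ^ (k * m))%N.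
Proof.
have [->|[g0]] := set_0Vmem [set g : placement | copy_of g == c].
  by rewrite cards0.
rewrite inE => /eqP c_def.
pose vertex_map (g : placement) := [ffun x : 'I_k * 'I_m => (x.1, g x)].
have vertex_map_inj : injective vertex_map.
  by move=> g1 g2 /ffunP eq12; apply/ffunP => x; have := eq12 x; rewrite !ffunE => -[].
have card_c : (#|c.1| <= k * m)%N.
  rewrite -c_def; apply: leq_trans (leq_imset_card _ _) _.
  by rewrite cardsT card_prod !card_ord.
rewrite -(card_imset _ vertex_map_inj).
apply: leq_trans (_ : _ <= #|finfun.ffun_on_mem ('I_k * 'I_m)%type (mem c.1)|)%N _.
  apply/subset_leq_card/subsetP => f /imsetP[g]; rewrite inE => /eqP c_g ->.
  by apply/ffun_onP => x; rewrite ffunE -c_g; apply/imsetP; exists x.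
by rewrite card_ffun_on card_prod !card_ord leq_exp2r ?km_gt0.
Qed.

Lemma injective_maps_le_copies :
  (#|[set g : placement | maps_box setT g && injectiveb g]|
     <= #|copies_at EF EH (i0, j0)| * (k * m) ^ (k * m))%N.
Proof.
rewrite -sum1_card (partition_big copy_of (mem (copies_at EF EH (i0, j0)))) /=;
  last by move=> g; rewrite inE => /andP[]; exact: copy_of_mem.
rewrite -sum_nat_const; apply: leq_sum => c _.
apply: leq_trans (copy_of_fibre c); rewrite sum1dep_card.
by apply/subset_leq_card/subsetP => g; rewrite !inE => /andP[_ ->].
Qed.

End Copies.

Section Supersaturation.
Variable alpha : R.
Hypothesis alpha_ge0 : 0 <= alpha.
Hypothesis EH_kpk : kpk_graph EH.
Hypothesis EH_codeg : forall S, legal S -> #|S| = k.-1 ->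
  alpha * n%:R <= (codeg EH S)%:R.

Definition root_neighbours (C : placement) : {set 'I_n} :=
  [set w | transversal_of (set_coord (fun i => C (i, z)) i0 w) \in EH].

Lemma maps_root_part C a :
  maps_box [set i0] (replace_part C i0 a)
    = (a z == j0) && [forall j, a j \in root_neighbours C].
Proof.
rewrite /maps_box /rooted ffunE eqxx; congr andb.
apply/forallP/forallP => [all_h j|all_j h].
  have h_box : in_box [set i0] (ffun_upd [ffun=> z] i0 j).
    by rewrite -[[set i0]]setU0; exact: in_box_upd in_box0.
  have := all_h (ffun_upd [ffun=> z] i0 j).
  rewrite h_box image_transversal_replace inE ffunE eqxx.
  congr (_ \in EH); apply: transversal_of_set_coord_eq => i iq.
  by rewrite !ffunE (negbTE iq).
apply/implyP => /forallP h_box; have := all_j (h i0).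
rewrite inE image_transversal_replace; congr (_ \in EH).
apply: transversal_of_set_coord_eq => i iq.
by have := h_box i; rewrite inE iq => /eqP ->.
Qed.

(* Averaging the codegree condition in a second part q: a proportion at
   least alpha of all placements C have j0 among their root neighbours. *)
Lemma root_neighbours_dense (q : 'I_k) : q != i0 ->
  alpha * #|placement|%:R <= \sum_(C : placement) (j0 \in root_neighbours C)%:R.
Proof.
move=> q_i0; rewrite -(ler_pM2l (_ : 0 < n%:R)) ?ltr0n ?n_gt0 //.
have -> : n%:R * \sum_(C : placement) (j0 \in root_neighbours C)%:R
    = #|'I_n|%:R * \sum_(C : placement) (j0 \in root_neighbours C)%:R.
  by rewrite card_ord.
rewrite -(sum_ffun_upd (q, z)) mulrCA.
rewrite -sum1_card natr_sum !mulr_sumr; apply: ler_sum => C _; rewrite mulr1.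
pose y := set_coord (fun i => C (i, z)) i0 j0.
have root_nbr t : (j0 \in root_neighbours (ffun_upd C (q, z) t))
    = (t \in [set w | transversal_of (set_coord y q w) \in EH]).
  rewrite !inE; congr (_ \in EH); apply: eq_imset => i.
  rewrite /y /set_coord ffunE xpair_eqE eqxx andbT.
  by case: (eqVneq i i0) => [->|//]; rewrite eq_sym (negbTE q_i0).
under eq_bigr => t _ do rewrite root_nbr.
by rewrite -card_indicator codeg_transversal.
Qed.

Lemma box_count_root : (1 < k)%N ->
  alpha ^+ m.+1 * rooted_count <= box_count [set i0].
Proof.
move=> k_gt1.
have [q q_i0] : exists q : 'I_k, q != i0.
  case: (eqVneq i0 (Ordinal k_gt1)) => [->|i0_1].
    by exists (Ordinal (ltnW k_gt1)); apply/eqP => /(congr1 val).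
  by exists (Ordinal k_gt1); rewrite eq_sym.
have n_pos : 0 < n%:R :> R by rewrite ltr0n n_gt0.
have an_ge0 : 0 <= alpha * n%:R by rewrite mulr_ge0 ?ler0n.
have rows_C C : (j0 \in root_neighbours C)%:R * (alpha * n%:R) ^+ m
    <= n%:R * \sum_(a : row) (maps_box [set i0] (replace_part C i0 a))%:R.
  under eq_bigr => a _ do rewrite maps_root_part.
  apply: le_trans (sum_rows_in _); rewrite ler_wpM2l ?ler0n //.
  apply: lerXn2r; rewrite ?nnegrE ?ler0n //.
  exact: codeg_transversal.
have total : alpha * #|placement|%:R * (alpha * n%:R) ^+ m
    <= n%:R * #|row|%:R * box_count [set i0].
  rewrite /box_count -[X in _ <= X]mulrA.
  have /= <- := sum_replace_part i0 (fun g => (maps_box [set i0] g)%:R).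
  rewrite mulr_sumr.
  apply: le_trans (ler_wpM2r (exprn_ge0 m an_ge0) (root_neighbours_dense q_i0)) _.
  by rewrite mulr_suml; apply: ler_sum => C _; exact: rows_C.
rewrite card_placement card_row in total.
rewrite -(ler_pM2l (exprn_gt0 m.+1 n_pos)).
have -> : n%:R ^+ m.+1 * (alpha ^+ m.+1 * rooted_count)
    = alpha * (n%:R * rooted_count) * (alpha * n%:R) ^+ m.
  by rewrite exprMn !exprS; ring.
by rewrite exprS.
Qed.

Lemma box_count_grow (N : nat) (B : {set 'I_k}) : (1 < k)%N -> #|B :\ i0| = N ->
  alpha ^+ (m.+1 * m ^ N) * rooted_count <= box_count (i0 |: B).
Proof.
move=> k_gt1; elim: N B => [|N IH] B card_B.
  have -> : i0 |: B = [set i0].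
    apply/setP => q; rewrite !inE; case: eqP => //= q_i0; apply/negP => qB.
    by move/cards0_eq/setP: card_B => /(_ q); rewrite !inE qB andbT; case: eqP.
  by rewrite expn0 muln1 box_count_root.
have [p pB] : exists p, p \in B :\ i0 by apply/set0Pn; rewrite -card_gt0 card_B.
have [p_i0 p_in_B] : p != i0 /\ p \in B by move: pB; rewrite !inE => /andP.
have -> : i0 |: B = p |: (i0 |: B :\ p).
  by rewrite setUCA setD1K.
rewrite expnSr mulnA exprM; apply: box_count_add_part => //.
- by rewrite !inE negb_or p_i0 eqxx.
- by rewrite exprn_ge0.
apply: IH; apply/eqP; rewrite -eqSS -card_B (cardsD1 p (B :\ i0)) pB.
by rewrite setDDl setUC -setDDl.
Qed.

Lemma box_count_full : (1 < k)%N ->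
  alpha ^+ (m.+1 * m ^ k.-1) * rooted_count <= box_count setT.
Proof.
move=> k_gt1; have -> : [set: 'I_k] = i0 |: [set: 'I_k] by rewrite setUT.
apply: box_count_grow => //.
have := cardsD1 i0 [set: 'I_k]; rewrite cardsT card_ord in_setT add1n.
by move: #|_ :\ i0| => N ->.
Qed.

(* Main counting bound: all but a (km)^2/n fraction of the box maps found
   above are injective, and each copy of F through v is counted at most
   (km)^(km) times. *)
Lemma copies_lower_bound (EF : {set {set 'I_k * 'I_m}}) :
  kpk_graph EF -> (1 < k)%N ->
  alpha ^+ (m.+1 * m ^ k.-1) * rooted_count - (k * m)%:R ^+ 2 * rooted_count / n%:R
    <= (#|copies_at EF EH (i0, j0)| * (k * m) ^ (k * m))%:R.
Proof.
move=> EF_kpk k_gt1; rewrite lerBlDr.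
apply: le_trans (box_count_full k_gt1) (le_trans box_count_injective _).
by rewrite sum_indicator_card lerD2r ler_nat injective_maps_le_copies.
Qed.

End Supersaturation.

End Placements.

Lemma absorb_error (R : realFieldType) (c D Q P N n : R) :
  0 < c -> 0 < Q -> 0 <= P -> 0 < n -> 2 * D / c <= n ->
  c * P - D * P / n <= N * Q -> c / (2 * Q) * P <= N.
Proof.
move=> c_gt0 Q_gt0 P_ge0 n_gt0 n_large bound.
have err : D / n <= c / 2.
  rewrite ler_pdivrMr // in n_large; rewrite ler_pdivrMr //; nra.
have half : c * P / 2 <= N * Q.
  apply: le_trans bound; rewrite mulrAC.
  have : D / n * P <= c / 2 * P by rewrite ler_wpM2r.
  lra.
rewrite -(ler_pM2r Q_gt0) (_ : c / (2 * Q) * P * Q = c * P / 2) //.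
by field; rewrite lt0r_neq0.
Qed.

Theorem lemma3p3 (R : realType) (k m : nat) (alpha : R)
    (EF : {set {set 'I_k * 'I_m}}) :
  (3 <= k)%N -> (1 <= m)%N -> 0 < alpha < 1 -> kpk_graph EF ->
  exists eta : R, 0 < eta /\
  exists n0 : nat, forall n : nat, (n0 <= n)%N ->
    forall EH : {set {set 'I_k * 'I_n}}, kpk_graph EH ->
    (forall S : {set 'I_k * 'I_n}, legal S -> #|S| = k.-1 ->
        alpha * n%:R <= (codeg EH S)%:R) ->
    forall v : 'I_k * 'I_n,
      eta * n%:R ^+ (k * m).-1 <= (#|copies_at EF EH v|)%:R.
Proof.
move=> k_ge3 m_gt0 /andP[alpha_gt0 _] EF_kpk.
set c := alpha ^+ (m.+1 * m ^ k.-1); set K := (k * m)%N.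
have c_gt0 : 0 < c by rewrite exprn_gt0.
have Q_gt0 : 0 < (K ^ K)%:R :> R.
  by rewrite ltr0n expn_gt0 muln_gt0 m_gt0 (ltnW (ltnW k_ge3)).
exists (c / (2 * (K ^ K)%:R)); split; first by rewrite divr_gt0 ?mulr_gt0.
exists (Num.Def.archi_bound (2 * K%:R ^+ 2 / c)) => n n_large EH EH_kpk EH_codeg [i0 j0].
have := copies_lower_bound i0 (Ordinal m_gt0) j0 (ltW alpha_gt0) EH_kpk EH_codeg EF_kpk
  (ltnW k_ge3).
rewrite rooted_countE -/c -/K natrM => bound; apply: (absorb_error _ _ _ _ _ bound) => //.
- by rewrite exprn_ge0.
- by rewrite ltr0n (n_gt0 j0).
have D_ge0 : 0 <= 2 * K%:R ^+ 2 / c :> R.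
  by rewrite divr_ge0 ?mulr_ge0 ?exprn_ge0 ?ler0n // ltW.
by apply: le_trans (ltW (archi_boundP D_ge0)) _; rewrite ler_nat.
Qed.
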